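(* Let $q\in\mathbb{C}$ with $|q|<1$ and let $\mathbf{s}=(s_1,\dots,s_d)\in\mathbb{Z}^d$. Then: (i) $\zeta_q^{\mathrm{I}}[\mathbf{s}]$ converges if $s_1+\dots+s_j>j$ for all $j=1,\dots,d$; (ii) $\zeta_q^{\mathrm{II}}[\mathbf{s}]$ converges if $s_1+\dots+s_j>0$ for all $j=1,\dots,d$; (iii) $\zeta_q^{\mathrm{III}}[\mathbf{s}]$ always converges; (iv) $\zeta_q^{\mathrm{IV}}[\mathbf{s}]$ converges if $s_1+\dots+s_j>1$ for all $j=1,\dots,d$.
   Context: For integer tuples $\mathbf{t}=(t_1,\dots,t_d)$, $\mathbf{s}=(s_1,\dots,s_d)$ and $|q|<1$ define $$\zeta_q^{\mathbf{t}}[\mathbf{s}]=(1-q)^{s_1+\dots+s_d}\sum_{k_1>\dots>k_d>0}\frac{q^{k_1t_1+\dots+k_dt_d}}{(1-q^{k_1})^{s_1}\cdots(1-q^{k_d})^{s_d}}.$$ Then $\zeta_q^{\mathrm{I}}[\mathbf{s}]:=\zeta_q^{(s_1-1,\dots,s_d-1)}[\mathbf{s}]$, $\zeta_q^{\mathrm{II}}[\mathbf{s}]:=\zeta_q^{(s_1,\dots,s_d)}[\mathbf{s}]$, $\zeta_q^{\mathrm{III}}[\mathbf{s}]:=\zeta_q^{(1,0,\dots,0)}[\mathbf{s}]$, $\zeta_q^{\mathrm{IV}}[\mathbf{s}]:=\zeta_q^{(s_1-1,s_2,\dots,s_d)}[\mathbf{s}]$. *)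

From mathcomp Require Import all_boot all_order all_algebra.
From mathcomp Require Import all_classical all_reals all_analysis.
From mathcomp Require Import complex.
Set Implicit Arguments. Unset Strict Implicit. Unset Printing Implicit Defensive.
Import Order.TTheory GRing.Theory Num.Theory.
Local Open Scope ring_scope.
Local Open Scope classical_set_scope.

Definition qmzv_index (d : nat) : set (seq nat) :=
  [set k | size k = d /\ sorted gtn k /\ all (fun x => 0 < x)%N k].

Definition qmzv_term (R : realType) (t s : seq int) (q : R[i]) (k : seq nat) : R[i] :=
  (1 - q) ^ (\sum_(i < size s) s`_i)
  * \prod_(i < size s)
      (q ^ ((nth 0%N k i)%:Z * t`_i) / (1 - q ^+ (nth 0%N k i)) ^ s`_i).

(* Convergence of zeta_q^t[s] (absolute convergence of the multiple series). *)
Definition qmzv_converges (R : realType) (t s : seq int) (q : R[i]) : Prop :=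
  summable (qmzv_index (size s))
    (fun k => (ComplexField.Normc.normc (qmzv_term t s q k))%:E).

Definition tI (s : seq int) : seq int := [seq x - 1 | x <- s].
Definition tII (s : seq int) : seq int := s.
Definition tIII (s : seq int) : seq int :=
  if s is _ :: s' then 1 :: [seq 0 | _ <- s'] else [::].
Definition tIV (s : seq int) : seq int :=
  if s is x :: s' then (x - 1) :: s' else [::].

Definition zetaI_converges (R : realType) (s : seq int) (q : R[i]) :=
  qmzv_converges (tI s) s q.
Definition zetaII_converges (R : realType) (s : seq int) (q : R[i]) :=
  qmzv_converges (tII s) s q.
Definition zetaIII_converges (R : realType) (s : seq int) (q : R[i]) :=
  qmzv_converges (tIII s) s q.
Definition zetaIV_converges (R : realType) (s : seq int) (q : R[i]) :=
  qmzv_converges (tIV s) s q.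

Definition cmod (R : realType) (z : R[i]) : R := ComplexField.Normc.normc z.

(* Write r = |q| < 1.  For k > 0 the factors |1 - q^k| lie in [1 - r, 2], so the
   modulus of a term is at most a constant times r^(k_1 t_1 + ... + k_d t_d).  When
   every partial sum t_1 + ... + t_j is at least 1, summation by parts along the
   decreasing sequence k_1 > ... > k_d gives k_1 t_1 + ... + k_d t_d >= k_1, and
   r^(k_1) <= p^(k_1 + ... + k_d) for any p < 1 with r <= p^d (Bernoulli's
   inequality provides one).  The terms are thus dominated by a product of d
   geometric series.  For the four families t = tI s, ..., tIV s the partial-sum
   condition is exactly the corresponding hypothesis on s. *)

From mathcomp Require Import all_boot all_order all_algebra.
From mathcomp Require Import all_classical all_reals all_analysis.
From mathcomp Require Import complex.
From mathcomp Require Import zify lra.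
Set Implicit Arguments. Unset Strict Implicit. Unset Printing Implicit Defensive.
Import Order.TTheory GRing.Theory Num.Theory.
Local Open Scope ring_scope.
Import ComplexField.Normc.

Section normc_lemmas.
Variable R : rcfType.
Implicit Types x y : R[i].

Lemma normc_ge0 x : 0 <= normc x.
Proof. by case: x => a b; rewrite /normc sqrtr_ge0. Qed.

Lemma normcXn x n : normc (x ^+ n) = normc x ^+ n.
Proof. by elim: n => [|n IH]; rewrite ?normc1 // !exprS normcM IH. Qed.

Lemma normcXz x (z : int) : normc (x ^ z) = normc x ^ z.
Proof. by case: z => n /=; rewrite ?normcV normcXn. Qed.

Lemma normc_prod (I : Type) (r : seq I) (P : pred I) (F : I -> R[i]) :
  normc (\prod_(i <- r | P i) F i) = \prod_(i <- r | P i) normc (F i).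
Proof. exact: (big_morph _ (@normcM R) (@normc1 R)). Qed.

Lemma lerB_normc x y : normc x - normc y <= normc (x - y).
Proof. by have := le_normcD (x - y) y; rewrite subrK; lra. Qed.

Lemma ler_normcB x y : normc (x - y) <= normc x + normc y.
Proof. by have := le_normcD x (- y); rewrite normcN. Qed.

Lemma normc_1Bexprn_bounds x k : normc x < 1 -> (0 < k)%N ->
  1 - normc x <= normc (1 - x ^+ k) <= 2.
Proof.
move=> x1 k0; have x0 := normc_ge0 x.
have xk : normc x ^+ k <= normc x.
  by rewrite -{2}(expr1 (normc x)) ler_wiXn2l // ltW.
have := lerB_normc 1 (x ^+ k); have := ler_normcB 1 (x ^+ k).
by rewrite normc1 normcXn => h1 h2; apply/andP; split; lra.
Qed.

End normc_lemmas.

Section real_lemmas.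
Variable R : realFieldType.

(* Not an equality because 0 ^ 0 = 1. *)
Lemma prodr_exprz_le (r : R) (I : Type) (s : seq I) (P : pred I) (z : I -> int) :
  0 <= r -> \prod_(i <- s | P i) r ^ z i <= r ^ (\sum_(i <- s | P i) z i).
Proof.
move=> r0; elim/big_rec2: _ => // i a b _ ab.
apply: (le_trans (ler_wpM2l (exprz_ge0 _ r0) ab)).
have [->|rn0] := eqVneq r 0; last by rewrite exprzDr ?unitfE.
rewrite !exp0rz; have [->|zn0] := eqVneq (z i) 0; first by rewrite add0r mul1r.
by rewrite mul0r; case: (_ == 0).
Qed.

Lemma exprz_le_exprn (r : R) (m : nat) (e : int) : 0 <= r -> r < 1 ->
  m%:Z <= e -> r ^ e <= r ^+ m.
Proof.
move=> r0 r1 me; have [->|rn0] := eqVneq r 0.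
  rewrite exp0rz; case: m me => [|m] me; first by case: (e == 0); rewrite ?ler01.
  have -> : (e == 0) = false by apply/negbTE; lia.
  by rewrite expr0n.
have rp : 0 < r by rewrite lt_neqAle eq_sym rn0.
by rewrite exprnP ler_piXz2l // -?topredE /=; lia.
Qed.

Lemma exprz_le_exprn_absz (x K : R) (z : int) : 0 < x -> x <= K -> x^-1 <= K ->
  x ^ z <= K ^+ `|z|%N.
Proof.
move=> x0 xK iK; case: z => n /=.
  by rewrite lerXn2r // ?nnegrE ?(ltW x0) // (le_trans (ltW x0)).
have -> : x ^ Negz n = x^-1 ^+ n.+1 by rewrite exprVn.
rewrite lerXn2r // ?nnegrE ?invr_ge0 ?(ltW x0) //.
by rewrite (le_trans _ iK) // invr_ge0 ltW.
Qed.

Lemma bernoulli_ineq (e : R) n : 0 <= e <= 1 -> 1 - n%:R * e <= (1 - e) ^+ n.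
Proof.
case/andP=> e0 e1; elim: n => [|n IH]; first by rewrite mul0r subr0.
rewrite exprSr -natr1; have : 0 <= n%:R * e * e :> R by rewrite !mulr_ge0.
have : (1 - n%:R * e) * (1 - e) <= (1 - e) ^+ n * (1 - e).
  by rewrite ler_wpM2r // subr_ge0.
lra.
Qed.

Lemma exists_root_bound (r : R) (d : nat) : 0 <= r < 1 ->
  exists2 p : R, 0 <= p < 1 & r <= p ^+ d.
Proof.
case/andP=> r0 r1; have d0 : 0 < d.+1%:R :> R by rewrite ltr0n.
pose e := (1 - r) / d.+1%:R.
have e0 : 0 < e by rewrite divr_gt0 // subr_gt0.
have : e * d.+1%:R = 1 - r by rewrite /e divfK ?gt_eqF.
rewrite -natr1 mulrDr mulr1 => ed.
have ed0 : 0 <= e * d%:R by rewrite mulr_ge0 ?ler0n ?ltW.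
have e1 : e <= 1 by lra.
exists (1 - e); first by apply/andP; split; lra.
have : 0 <= e <= 1 by rewrite ltW.
by move/(@bernoulli_ineq e d); lra.
Qed.

Lemma sumr_geometric_le (p : R) n : 0 <= p < 1 ->
  \sum_(j < n) p ^+ j <= (1 - p)^-1.
Proof.
case/andP=> p0 p1; have pp : 0 < 1 - p by rewrite subr_gt0.
have e : (1 - p) * \sum_(j < n) p ^+ j = 1 - p ^+ n.
  by rewrite -opprB mulNr -subrX1 opprB.
by rewrite -(ler_pM2l pp) mulrV ?unitfE ?gt_eqF // e gerBl exprn_ge0.
Qed.

End real_lemmas.

(* Summation by parts; the offset [c] makes the statement inductive. *)
Lemma abel_head_le (k : seq nat) (t : seq int) (c : int) : sorted geq k ->
  (forall j, (1 <= j <= size k)%N -> 1 <= c + \sum_(i < j) t`_i) ->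
  (head 0%N k)%:Z <= \sum_(i < size k) (nth 0%N k i)%:Z * t`_i + (head 0%N k)%:Z * c.
Proof.
elim: k t c => [|a k IH] t c /= srt H; first by rewrite big_ord0; lia.
have ha : (head 0%N k <= a)%N by case: k srt {IH H} => //= b k /andP[].
have H1 : 1 <= c + t`_0 by have := H 1%N isT; rewrite big_ord1.
have Hk j : (1 <= j <= size k)%N -> 1 <= c + t`_0 + \sum_(i < j) (behead t)`_i.
  move=> /andP[j1 jk]; have := H j.+1; rewrite big_ord_recl /= -addrA.
  under eq_bigr => i _ do rewrite /bump /= add1n -nth_behead.
  by apply; rewrite ltnS jk.
have := IH (behead t) (c + t`_0) (path_sorted srt) Hk.
rewrite big_ord_recl /=; set S := \sum_(i < size k) _ => IHk.
have : 0 <= (a%:Z - (head 0%N k)%:Z) * (c + t`_0 - 1).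
  by apply: mulr_ge0; rewrite subr_ge0 // lez_nat.
rewrite (_ : \sum_(i < size k) _ = S); first by nra.
by apply: eq_bigr => i _; rewrite /bump /= add1n -nth_behead.
Qed.

Lemma prod_exprz_le_prod_exprn (R : realFieldType) (r p : R) (t : seq int)
    (k : seq nat) :
  0 <= r < 1 -> 0 <= p <= 1 -> r <= p ^+ size k -> sorted geq k ->
  (forall j, (1 <= j <= size k)%N -> 1 <= \sum_(i < j) t`_i) ->
  \prod_(i < size k) r ^ ((nth 0%N k i)%:Z * t`_i)
    <= \prod_(i < size k) p ^+ nth 0%N k i.
Proof.
move=> /andP[r0 r1] /andP[p0 p1] rp srt Ht.
have le_head i : (i < size k)%N -> (nth 0%N k i <= head 0%N k)%N.
  rewrite -nth0 => ik; apply: (sorted_leq_nth (rev_trans leq_trans) leqnn) => //.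
  by rewrite inE (leq_ltn_trans _ ik).
have abel : (head 0%N k)%:Z <= \sum_(i < size k) (nth 0%N k i)%:Z * t`_i.
  by have := @abel_head_le k t 0 srt; rewrite mulr0 addr0; apply=> j /Ht; rewrite add0r.
apply: le_trans (prodr_exprz_le _ _ _ r0) _.
apply: le_trans (exprz_le_exprn r0 r1 abel) _.
apply: le_trans (lerXn2r _ _ _ rp) _; rewrite ?nnegrE ?exprn_ge0 //.
rewrite exprAC -[size k in X in X <= _]card_ord -prodr_const.
by apply: ler_prod => i _; rewrite exprn_ge0 //= ler_wiXn2l ?le_head.
Qed.

(* Distinct tuples give distinct maps 'I_d -> 'I_N.+1, and the sum over all such
   maps factors into d geometric sums. *)
Lemma sum_prod_exprn_le (R : realFieldType) (p : R) (d : nat) (L : seq (seq nat)) :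
  0 <= p < 1 -> uniq L -> (forall x, x \in L -> size x = d) ->
  \sum_(x <- L) \prod_(i < d) p ^+ (nth 0%N x i) <= ((1 - p)^-1) ^+ d.
Proof.
move=> p01 uL sL; have p0 : 0 <= p by case/andP: p01.
set N := \max_(x <- L) \max_(i < d) nth 0%N x i.
have leN x i : x \in L -> (i < d)%N -> (nth 0%N x i <= N)%N.
  move=> xL id; rewrite /N (big_rem x xL) /= (bigD1 (Ordinal id)) //=.
  by rewrite -maxnA leq_maxl.
pose g x : {ffun 'I_d -> 'I_N.+1} := [ffun i : 'I_d => inord (nth 0%N x i)].
pose Q (f : {ffun 'I_d -> 'I_N.+1}) := \prod_(i < d) p ^+ f i.
have -> : \sum_(x <- L) \prod_(i < d) p ^+ nth 0%N x i = \sum_(f <- map g L) Q f.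
  rewrite big_map; apply: eq_big_seq => x xL; apply: eq_bigr => i _.
  by rewrite ffunE inordK // ltnS leN.
have ug : uniq (map g L).
  rewrite map_inj_in_uniq // => x y xL yL /ffunP gxy.
  apply: (@eq_from_nth _ 0%N) => [|i]; first by rewrite sL ?sL.
  rewrite sL // => id; have /(congr1 val) := gxy (Ordinal id).
  by rewrite !ffunE /= !inordK // ltnS leN.
have Q0 f : 0 <= Q f by apply: prodr_ge0 => i _; apply: exprn_ge0.
rewrite big_uniq //; apply: (@le_trans _ _ (\sum_f Q f)).
  by rewrite [leRHS](bigID (mem (map g L))) /= lerDl sumr_ge0.
rewrite /Q -(bigA_distr_bigA (fun _ (j : 'I_N.+1) => p ^+ j)) /=.
rewrite -[d in leRHS]card_ord -prodr_const; apply: ler_prod => i _.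
by rewrite sumr_geometric_le // sumr_ge0 // => j _; apply: exprn_ge0.
Qed.

Lemma summable_sum_bounded (T : choiceType) (R : realType) (D : set T)
    (f : T -> R) (M : R) :
  (forall L : seq T, uniq L -> (forall x, x \in L -> D x) ->
     \sum_(x <- L) `|f x| <= M) ->
  summable D (fun x => (f x)%:E).
Proof.
move=> HM; rewrite /summable; apply: (le_lt_trans _ (ltry M)).
rewrite /esum; apply: ge_ereal_sup => _ [A [finA AD] <-].
rewrite fsbig_finite //= sumEFin lee_fin; apply: HM; first exact: finmap.fset_uniq.
by move=> x; rewrite in_fset_set // inE => /AD.
Qed.

Section qmzv_convergence.
Variables (R : realType) (q : R[i]).
Hypothesis hq : normc q < 1.

Let K := 2 + (1 - normc q)^-1.

Lemma normc_1Bexprn_invXz_le (k : nat) (z : int) : (0 < k)%N ->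
  (normc (1 - q ^+ k) ^ z)^-1 <= K ^+ `|z|%N.
Proof.
move=> k0; have /andP[w1 w2] := normc_1Bexprn_bounds hq k0.
have iq : 0 <= (1 - normc q)^-1 by rewrite invr_ge0 subr_ge0 ltW.
have wp : 0 < normc (1 - q ^+ k) by apply: lt_le_trans w1; rewrite subr_gt0.
rewrite invr_expz -(abszN z); apply: exprz_le_exprn_absz => //; rewrite /K.
  lra.
have : (normc (1 - q ^+ k))^-1 <= (1 - normc q)^-1.
  by rewrite lef_pV2 ?posrE ?subr_gt0.
lra.
Qed.

Lemma normc_qmzv_term (t s : seq int) (k : seq nat) :
  normc (qmzv_term t s q k) = normc ((1 - q) ^ (\sum_(i < size s) s`_i)) *
    ((\prod_(i < size s) normc q ^ ((nth 0%N k i)%:Z * t`_i)) *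
     \prod_(i < size s) (normc (1 - q ^+ nth 0%N k i) ^ s`_i)^-1).
Proof.
rewrite /qmzv_term normcM normc_prod -big_split /=; congr (_ * _).
by apply: eq_bigr => i _; rewrite normcM normcV !normcXz.
Qed.

Variables (t s : seq int).
Hypothesis partial_sums_ge1 :
  forall j, (1 <= j <= size s)%N -> 1 <= \sum_(i < j) t`_i.

Let C := normc ((1 - q) ^ (\sum_(i < size s) s`_i)) * \prod_(i < size s) K ^+ absz s`_i.

Lemma normc_qmzv_term_le (p : R) (k : seq nat) :
  0 <= p <= 1 -> normc q <= p ^+ size s -> qmzv_index (size s) k ->
  normc (qmzv_term t s q k) <= C * \prod_(i < size s) p ^+ nth 0%N k i.
Proof.
move=> p01 qp [sk [srt pos]].
rewrite normc_qmzv_term /C -mulrA ler_wpM2l ?normc_ge0 // [leRHS]mulrC.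
apply: ler_pM.
- by apply: prodr_ge0 => i _; rewrite exprz_ge0 ?normc_ge0.
- by apply: prodr_ge0 => i _; rewrite invr_ge0 exprz_ge0 ?normc_ge0.
- rewrite -sk; apply: prod_exprz_le_prod_exprn; rewrite ?normc_ge0 ?hq ?sk //.
  by apply: sub_sorted srt => a b /ltnW.
- apply: ler_prod => i _; rewrite invr_ge0 exprz_ge0 ?normc_ge0 //=.
  by apply: normc_1Bexprn_invXz_le; apply: (all_nthP 0%N pos); rewrite sk.
Qed.

Lemma qmzv_converges_of_partial_sums : qmzv_converges t s q.
Proof.
have [p p01 qp] : exists2 p : R, 0 <= p < 1 & normc q <= p ^+ size s.
  by apply: exists_root_bound; rewrite normc_ge0.
have p1 : 0 <= p <= 1 by case/andP: p01 => -> /ltW.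
have C0 : 0 <= C.
  rewrite mulr_ge0 ?normc_ge0 // prodr_ge0 // => i _; rewrite exprn_ge0 //.
  by rewrite addr_ge0 // invr_ge0 subr_ge0 ltW.
apply: (@summable_sum_bounded _ _ _ _ (C * ((1 - p)^-1) ^+ size s)) => L uL LD.
under eq_bigr do rewrite ger0_norm ?normc_ge0 //.
apply: (@le_trans _ _ (\sum_(x <- L) C * \prod_(i < size s) p ^+ nth 0%N x i)).
  rewrite big_seq [leRHS]big_seq; apply: ler_sum => x /LD.
  exact: normc_qmzv_term_le.
by rewrite -mulr_sumr ler_wpM2l // sum_prod_exprn_le // => x /LD [].
Qed.

End qmzv_convergence.

Lemma sum_tI (s : seq int) j : (j <= size s)%N ->
  \sum_(i < j) (tI s)`_i = \sum_(i < j) s`_i - j%:Z.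
Proof.
move=> js; have -> : j%:Z = \sum_(i < j) 1 by rewrite sumr_const card_ord natz.
rewrite -sumrB.
by apply: eq_bigr => i _; rewrite (nth_map 0) // (leq_trans (ltn_ord i)).
Qed.

Lemma sum_tIII (s : seq int) j : (0 < j <= size s)%N -> \sum_(i < j) (tIII s)`_i = 1.
Proof.
case: s j => [|x s] [|j] //= _.
have -> : [seq 0 | _ <- s] = nseq (size s) (0 : int) by elim: s => //= y s ->.
by rewrite big_ord_recl /= big1 ?addr0 // => i _; rewrite nth_nseq if_same.
Qed.

Lemma sum_tIV (s : seq int) j : (0 < j <= size s)%N ->
  \sum_(i < j) (tIV s)`_i = \sum_(i < j) s`_i - 1.
Proof. by case: s j => [|x s] [|j] //= _; rewrite !big_ord_recl /= addrAC. Qed.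

Theorem corollary2p2 (R : realType) (q : R[i]) (s : seq int) :
  cmod q < 1 ->
  [/\ (forall j : nat, (1 <= j <= size s)%N -> (\sum_(i < j) s`_i > j%:Z)) ->
        zetaI_converges s q,
      (forall j : nat, (1 <= j <= size s)%N -> (\sum_(i < j) s`_i > 0)) ->
        zetaII_converges s q,
      zetaIII_converges s q &
      (forall j : nat, (1 <= j <= size s)%N -> (\sum_(i < j) s`_i > 1)) ->
        zetaIV_converges s q].
Proof.
move=> hq; split.
- move=> H; apply: (qmzv_converges_of_partial_sums hq) => j hj.
  by rewrite sum_tI; [have := H j hj; lia | case/andP: hj].
- by move=> H; apply: (qmzv_converges_of_partial_sums hq) => j /H; rewrite /tII; lia.
- by apply: (qmzv_converges_of_partial_sums hq) => j /sum_tIII ->.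
- move=> H; apply: (qmzv_converges_of_partial_sums hq) => j hj.
  by rewrite sum_tIV //; have := H j hj; lia.
Qed.
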